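(* In the Byblos protocol described in the context, if a correct server decides to commit or to cancel a transaction, then every correct server eventually makes the same decision for that transaction.
   Context: Byblos protocol. There are $n=4f+1$ servers, at most $f$ Byzantine, the rest correct. Clients are not Byzantine (may crash). Messages between correct parties are eventually delivered, FIFO, authenticated; client messages are signed and unforgeable. Each correct server keeps sets $\mathit{committed}$, $\mathit{cancelled}$, $\mathit{resolving}$ among other state. A server decides to commit (resp. cancel) a transaction $T$ by adding it to $\mathit{committed}$ (resp. $\mathit{cancelled}$), which happens only as the outcome of a resolution of $T$: the server sends $\mathrm{StartResolution}(T,\mathit{code})$ to all servers and runs an off-the-shelf binary Byzantine consensus instance for $T$ with input $1$ (COMMIT) or $0$ (CANCEL); the consensus satisfies agreement (no two correct servers decide differently) and validity, and all correct servers participate in it (a correct server joins a resolution of $T$ upon receiving the client's Confirm for $T$, upon receiving $\mathrm{StartResolution}(T,\mathrm{COMMIT})$, upon receiving $\mathrm{StartResolution}(T,\mathrm{CANCEL})$ from $f+1$ distinct servers, or upon expiry of a timer for a pending set containing $T$); decision $1$ adds $T$ to $\mathit{committed}$ and decision $0$ adds $T$ to $\mathit{cancelled}$. *)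

From mathcomp Require Import all_boot.
Set Implicit Arguments. Unset Strict Implicit. Unset Printing Implicit Defensive.

(* Servers are 'I_(4*f+1), i.e. n = 4f+1.  Time is discrete (nat).
   Binary decisions: true = 1 = COMMIT, false = 0 = CANCEL. *)
Definition server (f : nat) := 'I_(4 * f + 1).

Record execution (f : nat) (Tx : Type) := Execution {
  correct   : pred (server f);
  committed : server f -> nat -> Tx -> bool;    (* T \in committed of s at time t *)
  cancelled : server f -> nat -> Tx -> bool;    (* T \in cancelled of s at time t *)
  joined    : server f -> nat -> Tx -> bool;    (* s has joined the resolution
                                                   (consensus instance) of T by time t *)
  cdecided  : server f -> nat -> Tx -> option bool
    (* output of the binary consensus instance for T at s by time t
       (None = not yet decided) *)
}.

Definition byblos_assumptions (f : nat) (Tx : Type) (E : execution f Tx) : Prop :=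
    (#|[pred s | ~~ correct E s]| <= f) /\
    (forall s t t' T d, t <= t' -> cdecided E s t T = Some d ->
                        cdecided E s t' T = Some d) /\
    (forall s t T d, cdecided E s t T = Some d -> joined E s t T) /\
    (forall s1 s2 t1 t2 T d1 d2, correct E s1 -> correct E s2 ->
        cdecided E s1 t1 T = Some d1 -> cdecided E s2 t2 T = Some d2 -> d1 = d2) /\
    (forall T, (forall s, correct E s -> exists t, joined E s t T) ->
        forall s, correct E s -> exists t d, cdecided E s t T = Some d) /\
    (forall T, (exists s t, correct E s /\ joined E s t T) ->
        forall s, correct E s -> exists t, joined E s t T) /\
    (forall s t T, correct E s ->
        committed E s t T = true <-> exists2 t', t' <= t & cdecided E s t' T = Some true) /\
    (forall s t T, correct E s ->
        cancelled E s t T = true <-> exists2 t', t' <= t & cdecided E s t' T = Some false).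

From mathcomp Require Import all_boot.

(* A correct server commits or cancels T only as the outcome of its consensus
   instance for T, in which it therefore took part.  Hence every correct server
   joins that instance, so by termination each of them decides, and by
   agreement each decides the same value, which it records in the same set. *)

Section Resolution.

Variables (f : nat) (Tx : Type) (E : execution f Tx).
Hypothesis HE : byblos_assumptions E.

Lemma cdecided_spreads {s t T d} :
  correct E s -> cdecided E s t T = Some d ->
  forall s', correct E s' -> exists t', cdecided E s' t' T = Some d.
Proof.
case: HE => _ [_ [joined_of_decided [agreement [termination [participation _]]]]].
move=> cs decided s' cs'.
have all_join : forall s', correct E s' -> exists t', joined E s' t' T.
  by apply: participation; exists s, t; split; last exact: joined_of_decided decided.
have [t' [d' decided']] := termination T all_join s' cs'.
by exists t'; rewrite decided' (agreement _ _ _ _ _ _ _ cs' cs decided' decided).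
Qed.

Lemma committed_spreads s t T :
  correct E s -> committed E s t T ->
  forall s', correct E s' -> exists t', committed E s' t' T.
Proof.
case: HE => _ [_ [_ [_ [_ [_ [commitE _]]]]]] cs /(commitE _ _ _ cs)[t1 _ decided].
move=> s' cs'; have [t' decided'] := cdecided_spreads cs decided s' cs'.
by exists t'; apply/(commitE _ _ _ cs'); exists t'.
Qed.

Lemma cancelled_spreads s t T :
  correct E s -> cancelled E s t T ->
  forall s', correct E s' -> exists t', cancelled E s' t' T.
Proof.
case: HE => _ [_ [_ [_ [_ [_ [_ cancelE]]]]]] cs /(cancelE _ _ _ cs)[t1 _ decided].
move=> s' cs'; have [t' decided'] := cdecided_spreads cs decided s' cs'.
by exists t'; apply/(cancelE _ _ _ cs'); exists t'.
Qed.

End Resolution.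

Theorem lemma6 (f : nat) (Tx : Type) (E : execution f Tx) (T : Tx) :
  byblos_assumptions E ->
  (forall s t, correct E s -> committed E s t T ->
     forall s', correct E s' -> exists t', committed E s' t' T) /\
  (forall s t, correct E s -> cancelled E s t T ->
     forall s', correct E s' -> exists t', cancelled E s' t' T).
Proof.
by move=> HE; split=> s t; [apply: committed_spreads | apply: cancelled_spreads].
Qed.
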